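(* Let $f_R:\mathbb{R}\to\mathbb{R}$ be the ReLU function, $f_R(t)=\max\{0,t\}$. Let $m\ge 1$ and let $\mathrm{Con}=(\mathrm{Con}_1,\dots,\mathrm{Con}_m)\in\mathbb{R}^m$ be arbitrary. For each $i\in\{1,\dots,m\}$ let $v_{i1},v_{i2}\in\mathbb{R}$ satisfy $v_{i1}v_{i2}=1$, and define the polar indicator pair $$(\mathrm{ID}_{1}(i),\mathrm{ID}_{2}(i))=\begin{cases}(0,\;v_{i2}) & \text{if } v_{i1}>0,\\ (v_{i2},\;-v_{i2}) & \text{if } v_{i1}<0.\end{cases}$$ Let $y\in\mathbb{R}^m$ be given by $y(i)=v_{i1}\,\mathrm{Con}_i$. Then for every $i$, $$\mathrm{ID}_1(i)\,y(i)+\mathrm{ID}_2(i)\,f_R(y(i)) = f_R(\mathrm{Con}_i).$$ Consequently, if $[\cdot]_{\mathcal S}$ denotes encryption under an additively homomorphic packed encryption scheme supporting slot-wise addition of ciphertexts and slot-wise multiplication of a ciphertext by a plaintext vector, then $\mathrm{Add}(\mathrm{Mult}([\mathrm{ID}_1]_{\mathcal S},y),\mathrm{Mult}([\mathrm{ID}_2]_{\mathcal S},f_R(y)))$ (with $f_R$ applied componentwise) is an encryption of the vector $(f_R(\mathrm{Con}_1),\dots,f_R(\mathrm{Con}_m))$.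
   Context: Setting: privacy-preserving neural network inference between a client $\mathcal C$ and a server $\mathcal S$. $\mathrm{Con}_i$ is the true (hidden) $i$-th output of a linear layer (convolution or dot product); the client only learns $y(i)=v_{i1}\mathrm{Con}_i$, where the random blinding factors $v_{i1}$ (and their inverses $v_{i2}$) are chosen by the server. $\mathrm{ID}_1=(\mathrm{ID}_1(1),\dots,\mathrm{ID}_1(m))$ and $\mathrm{ID}_2=(\mathrm{ID}_2(1),\dots,\mathrm{ID}_2(m))$ are packed and encrypted under the server's key, written $[\cdot]_{\mathcal S}$. $\mathrm{Add}([a],[b])$ is a ciphertext of the slot-wise sum $a+b$, and $\mathrm{Mult}([a],u)$ is a ciphertext of the slot-wise product $a\circ u$ for a plaintext vector $u$. Arithmetic is over the reals (real numbers are encoded into the plaintext space without overflow). *)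

(* R : realFieldType stands for the reals (the identity is
   purely order-algebraic).  Vectors in R^m are row vectors 'rV[R]_m. *)
From HB Require Import structures.
From mathcomp Require Import all_boot all_order all_algebra.
Set Implicit Arguments. Unset Strict Implicit. Unset Printing Implicit Defensive.
Import Order.TTheory GRing.Theory Num.Theory.
Local Open Scope ring_scope.

Definition relu {R : realFieldType} (t : R) : R := Num.max 0 t.

Definition reluv {R : realFieldType} {m : nat} (y : 'rV[R]_m) : 'rV[R]_m :=
  \row_j relu (y 0 j).

Definition hadamard {R : realFieldType} {m : nat} (a u : 'rV[R]_m) : 'rV[R]_m :=
  \row_j (a 0 j * u 0 j).

(* polar indicator pair; the "else" branch is the case v_{i1} < 0
   (v_{i1} <> 0 since v_{i1} v_{i2} = 1) *)
Definition ID1 {R : realFieldType} {m : nat} (v1 v2 : 'I_m -> R) : 'rV[R]_m :=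
  \row_i (if 0 < v1 i then 0 else v2 i).
Definition ID2 {R : realFieldType} {m : nat} (v1 v2 : 'I_m -> R) : 'rV[R]_m :=
  \row_i (if 0 < v1 i then v2 i else - v2 i).

Definition blind {R : realFieldType} {m : nat} (v1 : 'I_m -> R) (Con : 'rV[R]_m)
  : 'rV[R]_m := \row_i (v1 i * Con 0 i).

(* The blinding factor v_{i1} is a nonzero scalar, and ReLU is positively
   homogeneous: for v_{i1} > 0 it commutes with the blinding, so multiplying
   by v_{i2} = 1 / v_{i1} unblinds it.  For v_{i1} < 0 the scaling turns the
   max into a min, and max + min = 0 + v_{i1} Con_i recovers ReLU as the
   blinded value minus the ReLU of the blinded value, again up to v_{i2}. *)
From HB Require Import structures.
From mathcomp Require Import all_boot all_order all_algebra.
Import Order.TTheory GRing.Theory Num.Theory.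
Local Open Scope ring_scope.

Section Relu.
Variable R : realFieldType.
Implicit Types a b t : R.

Lemma relu_pMr a t : 0 <= a -> relu (a * t) = a * relu t.
Proof. by move=> a_ge0; rewrite /relu maxr_pMr // mulr0. Qed.

Lemma relu_nMr a t : a <= 0 -> relu (a * t) = a * t - a * relu t.
Proof.
move=> a_le0; rewrite /relu maxr_nMr // mulr0.
by apply/eqP; rewrite eq_sym subr_eq addr_max_min add0r.
Qed.

Lemma polar_indicator_relu a b t : a * b = 1 ->
  (if 0 < a then 0 else b) * (a * t) + (if 0 < a then b else - b) * relu (a * t)
  = relu t.
Proof.
move=> ab1; have unblind u : b * (a * u) = u by rewrite mulrA (mulrC b) ab1 mul1r.
case: ltP => [a_gt0 | a_le0].
  by rewrite mul0r add0r relu_pMr ?ltW.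
by rewrite relu_nMr // mulNr -mulrBr opprB addrC subrK unblind.
Qed.

End Relu.

Theorem mainTheorem1 (R : realFieldType) (m : nat) (Hm : (1 <= m)%N)
    (Con : 'rV[R]_m) (v1 v2 : 'I_m -> R)
    (Hv : forall i, v1 i * v2 i = 1) :
  (forall i : 'I_m,
     (ID1 v1 v2) 0 i * (blind v1 Con) 0 i
     + (ID2 v1 v2) 0 i * relu ((blind v1 Con) 0 i) = relu (Con 0 i)) /\
  (* consequence for any additively homomorphic packed encryption scheme,
     modelled by its decryption map Dec: Add decrypts to the slot-wise sum,
     Mult by a plaintext vector to the slot-wise product *)
  (forall (Ctxt : Type) (Dec : Ctxt -> 'rV[R]_m)
          (Add : Ctxt -> Ctxt -> Ctxt) (Mult : Ctxt -> 'rV[R]_m -> Ctxt),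
      (forall a b, Dec (Add a b) = Dec a + Dec b) ->
      (forall a u, Dec (Mult a u) = hadamard (Dec a) u) ->
      forall c1 c2 : Ctxt, Dec c1 = ID1 v1 v2 -> Dec c2 = ID2 v1 v2 ->
      Dec (Add (Mult c1 (blind v1 Con)) (Mult c2 (reluv (blind v1 Con))))
        = reluv Con).
Proof.
have slotwise i : (ID1 v1 v2) 0 i * (blind v1 Con) 0 i
    + (ID2 v1 v2) 0 i * relu ((blind v1 Con) 0 i) = relu (Con 0 i).
  by rewrite !mxE; apply: polar_indicator_relu.
split=> // Ctxt Dec Add Mult DecAdd DecMult c1 c2 Dec_c1 Dec_c2.
rewrite DecAdd !DecMult Dec_c1 Dec_c2; apply/rowP => i.
by rewrite !mxE -slotwise !mxE.
Qed.
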